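(* Let $N\ge 1$, let $\mathbf{a}_1,\dots,\mathbf{a}_N\in\mathbb{R}^3$ and $\mathbf{x}_G\in\mathbb{R}^3$, set $d_i=\|\mathbf{x}_G-\mathbf{a}_i\|$ and $\mathbf{a}_\ast=\frac1N\sum_{i=1}^N\mathbf{a}_i$, and define $$F_{L2}(\mathbf{x},\lambda)=\frac14\sum_{i=1}^N\bigl(\|\mathbf{x}-\mathbf{a}_i\|^2+\lambda^2-d_i^2\bigr)^2,\qquad \mathbf{x}\in\mathbb{R}^3,\ \lambda\in\mathbb{R}.$$ Assume the vectors $\mathbf{a}_1-\mathbf{a}_\ast,\dots,\mathbf{a}_N-\mathbf{a}_\ast$ span $\mathbb{R}^3$. Then $F_{L2}$ has no stationary point $(\mathbf{x},\lambda)$ with $\lambda\neq0$ and $\mathbf{x}\neq\mathbf{x}_G$; more precisely, if $\lambda\ne0$, $\mathbf{x}\ne\mathbf{x}_G$ and $\frac{\partial F_{L2}}{\partial\lambda}(\mathbf{x},\lambda)=0$, then $\nabla_{\mathbf{x}}F_{L2}(\mathbf{x},\lambda)\neq0$. In particular $F_{L2}$ has no local minima with $\lambda\ne0$ and $\mathbf{x}\ne\mathbf{x}_G$.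
   Context: $F_{L2}$ is the squared-range Time of Arrival least-squares objective for exact distances $d_i$ from known base stations $\mathbf{a}_i$ to an object at $\mathbf{x}_G$, augmented with an additional variable $\lambda$. *)

From HB Require Import structures.
From mathcomp Require Import all_boot all_order all_algebra.
From mathcomp Require Import all_classical all_reals all_analysis.
Set Implicit Arguments. Unset Strict Implicit. Unset Printing Implicit Defensive.
Import Order.TTheory GRing.Theory Num.Theory.
Import numFieldNormedType.Exports.
Local Open Scope ring_scope.

Definition sqnorm3 {R : realType} (v : 'rV[R]_3) : R := \sum_(j < 3) (v 0 j) ^+ 2.

Definition enorm3 {R : realType} (v : 'rV[R]_3) : R := Num.sqrt (sqnorm3 v).

Definition dist_i {R : realType} {N : nat} (a : 'I_N -> 'rV[R]_3) (xG : 'rV[R]_3)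
  (i : 'I_N) : R := enorm3 (xG - a i).

Definition centroid {R : realType} {N : nat} (a : 'I_N -> 'rV[R]_3) : 'rV[R]_3 :=
  N%:R^-1 *: \sum_(i < N) a i.

Definition FL2 {R : realType} {N : nat} (a : 'I_N -> 'rV[R]_3) (xG : 'rV[R]_3)
  (x : 'rV[R]_3) (lam : R) : R :=
  4^-1 * \sum_(i < N) (enorm3 (x - a i) ^+ 2 + lam ^+ 2 - dist_i a xG i ^+ 2) ^+ 2.

Definition e3 {R : realType} (j : 'I_3) : 'rV[R]_3 := delta_mx 0 j.

Definition gradx_FL2 {R : realType} {N : nat} (a : 'I_N -> 'rV[R]_3) (xG : 'rV[R]_3)
  (x : 'rV[R]_3) (lam : R) : 'rV[R]_3 :=
  \row_(j < 3) ('D_(e3 j) (fun y => FL2 a xG y lam) x).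

Definition dlam_FL2 {R : realType} {N : nat} (a : 'I_N -> 'rV[R]_3) (xG : 'rV[R]_3)
  (x : 'rV[R]_3) (lam : R) : R :=
  derive1 (fun l : R => FL2 a xG x l) lam.

Definition centered_span {R : realType} {N : nat} (a : 'I_N -> 'rV[R]_3) : bool :=
  row_full (\matrix_(i < N) (a i - centroid a)).

From HB Require Import structures.
From mathcomp Require Import all_boot all_order all_algebra.
From mathcomp Require Import all_classical all_reals all_analysis.
From mathcomp Require Import ring lra.

(* Write r_i = ||x - a_i||^2 + lam^2 - d_i^2, so that dF/dlam = lam * sum_i r_i
   and grad_x F = sum_i r_i (x - a_i).  Expanding d_i^2 = ||x_G - a_i||^2 gives
   r_i = K - 2 <x - x_G, a_i> with K independent of i.  At a point where both
   derivatives vanish and lam <> 0 we get sum_i r_i = 0 and sum_i r_i a_i = 0,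
   hence sum_i r_i^2 = K sum_i r_i - 2 <x - x_G, sum_i r_i a_i> = 0: every r_i
   vanishes, so <x - x_G, a_i> is independent of i, i.e. x - x_G is orthogonal
   to every a_i - a_*, and the spanning hypothesis forces x = x_G.  A local
   minimum is stationary because F is a polynomial along every coordinate line. *)

Set Implicit Arguments.
Unset Strict Implicit.
Unset Printing Implicit Defensive.

Import Order.TTheory GRing.Theory Num.Theory.
Import numFieldNormedType.Exports.
Local Open Scope ring_scope.

Section dot_product.
Variables (R : realType) (n : nat).
Implicit Types (u v w : 'rV[R]_n) (c : R).

Definition dot u v : R := \sum_(k < n) u 0 k * v 0 k.

Lemma dotC u v : dot u v = dot v u.
Proof. by apply: eq_bigr => k _; rewrite mulrC. Qed.

Lemma dotr0 u : dot u 0 = 0.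
Proof. by rewrite /dot big1 // => k _; rewrite mxE mulr0. Qed.

Lemma dotBr u v w : dot u (v - w) = dot u v - dot u w.
Proof. by rewrite /dot -sumrB; apply: eq_bigr => k _; rewrite !mxE mulrBr. Qed.

Lemma dotZr u c v : dot u (c *: v) = c * dot u v.
Proof. by rewrite /dot mulr_sumr; apply: eq_bigr => k _; rewrite mxE mulrCA. Qed.

Lemma dot_sumr (I : Type) (r : seq I) (P : pred I) (F : I -> 'rV[R]_n) u :
  dot u (\sum_(i <- r | P i) F i) = \sum_(i <- r | P i) dot u (F i).
Proof.
rewrite /dot exchange_big /=; apply: eq_bigr => k _.
by rewrite summxE mulr_sumr.
Qed.

End dot_product.

Lemma derive_as_derive1 (R : realType) (V W : normedModType R) (f : V -> W) (x v : V) :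
  'D_v f x = derive1 (fun t : R => f (t *: v + x)) 0.
Proof.
rewrite derive1E /derive; do 2 f_equal; apply/funext => h /=.
by rewrite scale0r add0r addr0 [h%:A]mulr1.
Qed.

Lemma derive1_local_min (R : realType) (f : R -> R) (c : R) :
  (forall t, derivable f t 1) -> (\forall t \near c, f c <= f t) -> derive1 f c = 0.
Proof.
move=> fd /nbhs_ballP[e /= e0 fmin].
have cmin : forall t, t \in `](c - e), (c + e)[ -> f c <= f t.
  move=> t; rewrite in_itv /= => /andP[ct tc]; apply: fmin.
  by rewrite /ball /= ltr_norml; apply/andP; split; lra.
rewrite derive1E; apply: derive_val; apply: (derive1_at_min _ (fun t _ => fd t) _ cmin).
  lra.
by rewrite in_itv /=; apply/andP; split; lra.
Qed.

Lemma residuals_eq0 (R : realType) (n N : nat) (r : 'I_N -> R) (K : R)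
    (u : 'rV[R]_n) (b : 'I_N -> 'rV[R]_n) :
  (forall i, r i = K - 2 * dot u (b i)) ->
  \sum_i r i = 0 -> \sum_i r i *: b i = 0 -> forall i, r i = 0.
Proof.
move=> rE sum_r0 sum_rb0.
have sum_sqr0 : \sum_i r i ^+ 2 = 0.
  have -> : \sum_i r i ^+ 2 = K * \sum_i r i - 2 * dot u (\sum_i r i *: b i).
    rewrite dot_sumr mulr_sumr mulr_sumr -sumrB; apply: eq_bigr => i _.
    by rewrite dotZr expr2 {2}rE; ring.
  by rewrite sum_r0 sum_rb0 dotr0 !mulr0 subrr.
move=> i; apply/eqP; rewrite -sqrf_eq0; apply/eqP.
exact: psumr_eq0P (fun j _ => sqr_ge0 (r j)) sum_sqr0 i isT.
Qed.

Lemma dot_centroid (R : realType) (N : nat) (a : 'I_N -> 'rV[R]_3) (u : 'rV[R]_3) (c : R) :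
  (0 < N)%N -> (forall i, dot u (a i) = c) -> dot u (centroid a) = c.
Proof.
move=> N_gt0 uac; rewrite /centroid dotZr dot_sumr.
under eq_bigr do rewrite uac.
by rewrite sumr_const card_ord -[c *+ N]mulr_natl mulKf // pnatr_eq0 -lt0n.
Qed.

Lemma centered_span_dot_const (R : realType) (N : nat) (a : 'I_N -> 'rV[R]_3)
    (u : 'rV[R]_3) (c : R) :
  (0 < N)%N -> centered_span a -> (forall i, dot u (a i) = c) -> u = 0.
Proof.
move=> N_gt0 span uac; apply: trmx_inj; rewrite trmx0.
apply: (row_full_inj span); rewrite mulmx0; apply/matrixP => i k.
rewrite (ord1 k) mxE [RHS]mxE.
transitivity (dot (a i - centroid a) u); first by apply: eq_bigr => j _; rewrite !mxE.
by rewrite dotC dotBr uac (dot_centroid N_gt0 uac) subrr.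
Qed.

Section quarter_sum_sqr.
Variables (R : realType) (N : nat) (q : 'I_N -> {poly R}).

Definition quarter_sum_sqr : {poly R} := 4^-1 *: \sum_i q i ^+ 2.

Lemma derive1_quarter_sum_sqr (f : R -> R) (c : R) :
  f =1 horner quarter_sum_sqr ->
  derive1 f c = 2^-1 * \sum_i (q i).[c] * (q i)^`().[c].
Proof.
move=> fE; rewrite (funext fE) -derivE derivZ raddf_sum hornerZ horner_sum.
rewrite mulr_sumr mulr_sumr; apply: eq_bigr => i _.
by rewrite /= deriv_exp hornerMn hornerM; field.
Qed.

End quarter_sum_sqr.

Lemma enorm3_sqr (R : realType) (v : 'rV[R]_3) : enorm3 v ^+ 2 = sqnorm3 v.
Proof. by rewrite sqr_sqrtr // sumr_ge0 // => j _; exact: sqr_ge0. Qed.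

Lemma sqnorm3_line (R : realType) (v : 'rV[R]_3) (j : 'I_3) (t : R) :
  sqnorm3 (t *: e3 j + v) = sqnorm3 v + 2 * v 0 j * t + t ^+ 2.
Proof.
rewrite /sqnorm3 (bigD1 j) //= [in RHS](bigD1 j) //= !mxE !eqxx mulr1.
under eq_bigr => k kj do rewrite !mxE (negbTE kj) andbF mulr0 add0r.
ring.
Qed.

Section FL2.
Variables (R : realType) (N : nat) (a : 'I_N -> 'rV[R]_3) (xG : 'rV[R]_3).

Definition residual (x : 'rV[R]_3) (lam : R) (i : 'I_N) : R :=
  sqnorm3 (x - a i) + lam ^+ 2 - sqnorm3 (xG - a i).

Lemma FL2E x lam : FL2 a xG x lam = 4^-1 * \sum_i residual x lam i ^+ 2.
Proof. by congr (_ * _); apply: eq_bigr => i _; rewrite /dist_i !enorm3_sqr. Qed.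

Lemma residualE x lam i :
  residual x lam i = sqnorm3 x - sqnorm3 xG + lam ^+ 2 - 2 * dot (x - xG) (a i).
Proof. by rewrite /residual /sqnorm3 /dot !big_ord_recr !big_ord0 /= !mxE; ring. Qed.

Lemma FL2_along_lam_poly x :
  FL2 a xG x =1 horner (quarter_sum_sqr
    (fun i => (sqnorm3 (x - a i) - sqnorm3 (xG - a i))%:P + 'X^2)).
Proof.
move=> lam; rewrite FL2E hornerZ horner_sum; congr (_ * _); apply: eq_bigr => i _.
by rewrite !hornerE /residual addrAC.
Qed.

Lemma FL2_along_e3_poly x lam j :
  (fun t => FL2 a xG (t *: e3 j + x) lam) =1 horner (quarter_sum_sqr
    (fun i => (residual x lam i)%:P + (2 * (x - a i) 0 j) *: 'X + 'X^2)).
Proof.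
move=> t; rewrite FL2E hornerZ horner_sum; congr (_ * _); apply: eq_bigr => i _.
by rewrite !hornerE /residual -[t *: e3 j + x - a i]addrA sqnorm3_line; ring.
Qed.

Lemma dlam_FL2E x lam : dlam_FL2 a xG x lam = lam * \sum_i residual x lam i.
Proof.
rewrite /dlam_FL2 (derive1_quarter_sum_sqr _ (FL2_along_lam_poly x)) mulr_sumr mulr_sumr.
apply: eq_bigr => i _; rewrite !(derivD, derivC, derivXn) /residual.
by rewrite !(hornerD, hornerC, hornerXn, hornerMn); field.
Qed.

Lemma gradx_FL2E x lam : gradx_FL2 a xG x lam = \sum_i residual x lam i *: (x - a i).
Proof.
apply/rowP => j; rewrite !mxE summxE derive_as_derive1.
rewrite (derive1_quarter_sum_sqr _ (FL2_along_e3_poly x lam j)) mulr_sumr.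
apply: eq_bigr => i _; rewrite !(derivD, derivC, derivXn, derivZ, derivX) !mxE.
by rewrite !(hornerD, hornerC, hornerXn, hornerMn, hornerZ, hornerX); field.
Qed.

Lemma FL2_stationary_eq x lam :
  (0 < N)%N -> centered_span a -> lam != 0 ->
  dlam_FL2 a xG x lam = 0 -> gradx_FL2 a xG x lam = 0 -> x = xG.
Proof.
move=> N_gt0 span lam_neq0; rewrite dlam_FL2E gradx_FL2E => /eqP.
rewrite mulf_eq0 (negbTE lam_neq0) => /eqP sum_r0 sum_rxa0.
have sum_ra0 : \sum_i residual x lam i *: a i = 0.
  move: sum_rxa0; under eq_bigr do rewrite scalerBr.
  by rewrite sumrB -scaler_suml sum_r0 scale0r sub0r => /eqP; rewrite oppr_eq0 => /eqP.
have r0 := residuals_eq0 (residualE x lam) sum_r0 sum_ra0.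
apply/eqP; rewrite -subr_eq0; apply/eqP.
apply: (centered_span_dot_const (c := (sqnorm3 x - sqnorm3 xG + lam ^+ 2) / 2) N_gt0 span).
move=> i; have /eqP := residualE x lam i.
by rewrite r0 eq_sym subr_eq0 => /eqP ->; field.
Qed.

Lemma FL2_local_min_stationary x lam :
  (\forall p \near (x, lam), FL2 a xG x lam <= FL2 a xG p.1 p.2) ->
  dlam_FL2 a xG x lam = 0 /\ gradx_FL2 a xG x lam = 0.
Proof.
move=> xmin; split.
  apply: derive1_local_min => [t|].
    by rewrite (funext (FL2_along_lam_poly x)); exact: derivable_horner.
  have lam_line : ((fun l : R => (x, l)) @ lam --> (x, lam))%classic.
    exact: cvg_pair (cvg_cst x) cvg_id.
  exact: lam_line _ xmin.
apply/rowP => j; rewrite !mxE derive_as_derive1; apply: derive1_local_min => [t|].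
  by rewrite (funext (FL2_along_e3_poly x lam j)); exact: derivable_horner.
have x_line : ((fun t : R => (t *: e3 j + x, lam)) @ 0 --> (0 *: e3 j + x, lam))%classic.
  exact: cvg_pair (cvgD (cvgZ cvg_id (cvg_cst _)) (cvg_cst x)) (cvg_cst lam).
by move: x_line; rewrite scale0r add0r => /(_ _ xmin).
Qed.

End FL2.

Theorem mainTheorem2 (R : realType) (N : nat) (a : 'I_N -> 'rV[R]_3) (xG : 'rV[R]_3) :
  (0 < N)%N ->
  centered_span a ->
  (forall (x : 'rV[R]_3) (lam : R),
      lam != 0 -> x != xG -> dlam_FL2 a xG x lam = 0 ->
      gradx_FL2 a xG x lam != 0)
  /\
  (forall (x : 'rV[R]_3) (lam : R),
      lam != 0 -> x != xG ->
      ~ (\forall p \near (x, lam), FL2 a xG x lam <= FL2 a xG p.1 p.2)).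
Proof.
move=> N_gt0 span; split=> [x lam lam_neq0 x_neq_xG dlam0 | x lam lam_neq0 x_neq_xG xmin].
  apply/eqP => grad0; move/eqP: x_neq_xG; apply.
  exact: FL2_stationary_eq N_gt0 span lam_neq0 dlam0 grad0.
have [dlam0 grad0] := FL2_local_min_stationary xmin.
by move/eqP: x_neq_xG; apply; exact: FL2_stationary_eq N_gt0 span lam_neq0 dlam0 grad0.
Qed.
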